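(* In the setting described in the context, let $X\in\mathcal{K}(\mathbb{R}^n)$ satisfy $X\cap\mathcal{D}_{\mathcal{A}}=\emptyset$, and let $(X_k)_{k\in\mathbb{Z}_+}\subset\mathcal{K}(\mathbb{R}^n)$ converge to $X$ in the Hausdorff distance. Then $\lim_{k\to\infty}\mathcal{V}(X_k)=\infty$.
   Context: Let $\|\cdot\|$ be a norm on $\mathbb{R}^n$ and $\mathrm{dist}(x,\Omega):=\inf_{y\in\Omega}\|x-y\|$. Let $\mathcal{K}(\mathbb{R}^n)$ denote the nonempty compact subsets of $\mathbb{R}^n$, with Hausdorff distance $d_H(X,Y):=\max\{\sup_{x\in X}\mathrm{dist}(x,Y),\sup_{y\in Y}\mathrm{dist}(y,X)\}$. Consider $x_{k+1}=f(x_k,u_k)$ with $f:\mathbb{R}^n\times\mathbb{R}^m\to\mathbb{R}^n$ continuous and inputs $u_k\in U$, $U\subset\mathbb{R}^m$ nonempty compact. For $x\in\mathbb{R}^n$ and $\pi:\mathbb{Z}_+\to U$, $\varphi_x^\pi(0)=x$, $\varphi_x^\pi(k+1)=f(\varphi_x^\pi(k),\pi(k))$; $\mathcal{R}(X,k):=\{\varphi_x^\pi(k):x\in X,\pi\in U^{\mathbb{Z}_+}\}$. Let $\mathcal{A}\in\mathcal{K}(\mathbb{R}^n)$ be controlled invariant. Assume local $\ell_p$-stabilizability: there exist $r>0$, $M\ge1$, $p>0$, $\lambda:[0,r]\times\mathbb{Z}_+\to\mathbb{R}_+$ such that (1) for each $k$, $s\mapsto\lambda(s,k)$ is continuous, nondecreasing,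 $\lambda(0,k)=0$; for each $s$, $k\mapsto\lambda(s,k)$ is nonincreasing, $\lambda(s,0)\le s$; (2) $\sum_{k}\lambda(r,k)^p<\infty$; (3) for every $x$ with $\mathrm{dist}(x,\mathcal{A})\le r$ there is $\pi\in U^{\mathbb{Z}_+}$ with $\mathrm{dist}(\varphi_x^\pi(k),\mathcal{A})\le M\lambda(\mathrm{dist}(x,\mathcal{A}),k)$ for all $k$. Let $\mathcal{D}_{\mathcal{A}}:=\{x:\exists\pi\in U^{\mathbb{Z}_+},\ \lim_{k\to\infty}\mathrm{dist}(\varphi_x^\pi(k),\mathcal{A})=0\}$. Let $\alpha:\mathbb{R}^n\to\mathbb{R}_+$ be continuous with $\underline{\alpha}\,\mathrm{dist}(x,\mathcal{A})^{\bar p}\le\alpha(x)\le\overline{\alpha}\,\mathrm{dist}(x,\mathcal{A})^{\bar p}$, constants $\underline{\alpha},\overline{\alpha}>0$, $\bar p\ge p$. Define $\Psi(X):=\inf_{y\in X}\alpha(y)$ and $\mathcal{V}(X):=\sum_{k=0}^\infty\Psi(\mathcal{R}(X,k))\in[0,\infty]$. *)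

From HB Require Import structures.
From mathcomp Require Import all_boot all_order all_algebra.
From mathcomp Require Import all_classical all_reals all_analysis.
Set Implicit Arguments. Unset Strict Implicit. Unset Printing Implicit Defensive.
Import Order.TTheory GRing.Theory Num.Theory.
Import numFieldNormedType.Exports.
Local Open Scope classical_set_scope.
Local Open Scope ring_scope.

Definition is_norm (R : realType) (n : nat) (N : 'rV[R]_n -> R) : Prop :=
  [/\ forall x, N x = 0 -> x = 0,
      forall (a : R) x, N (a *: x) = `|a| * N x
    & forall x y, N (x + y) <= N x + N y].

Definition dist (R : realType) (n : nat) (N : 'rV[R]_n -> R)
  (x : 'rV[R]_n) (Om : set 'rV[R]_n) : R :=
  inf [set N (x - y) | y in Om].

Definition hausdorff (R : realType) (n : nat) (N : 'rV[R]_n -> R)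
  (X Y : set 'rV[R]_n) : R :=
  Num.max (sup [set dist N x Y | x in X]) (sup [set dist N y X | y in Y]).

Definition nonempty_compact (R : realType) (n : nat) (X : set 'rV[R]_n) : Prop :=
  compact X /\ X !=set0.

Definition admissible (R : realType) (m : nat) (U : set 'rV[R]_m)
  (pi : nat -> 'rV[R]_m) : Prop := forall k, U (pi k).

Fixpoint traj (R : realType) (n m : nat) (f : 'rV[R]_n -> 'rV[R]_m -> 'rV[R]_n)
  (x : 'rV[R]_n) (pi : nat -> 'rV[R]_m) (k : nat) : 'rV[R]_n :=
  match k with
  | 0%N => x
  | k'.+1 => f (traj f x pi k') (pi k')
  end.

Definition reach (R : realType) (n m : nat) (f : 'rV[R]_n -> 'rV[R]_m -> 'rV[R]_n)
  (U : set 'rV[R]_m) (X : set 'rV[R]_n) (k : nat) : set 'rV[R]_n :=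
  [set z | exists x, exists pi, [/\ X x, admissible U pi & z = traj f x pi k]].

Definition controlled_invariant (R : realType) (n m : nat)
  (f : 'rV[R]_n -> 'rV[R]_m -> 'rV[R]_n) (U : set 'rV[R]_m) (A : set 'rV[R]_n) : Prop :=
  forall x, A x -> exists u, U u /\ A (f x u).

Definition lp_stabilizable (R : realType) (n m : nat) (N : 'rV[R]_n -> R)
  (f : 'rV[R]_n -> 'rV[R]_m -> 'rV[R]_n) (U : set 'rV[R]_m) (A : set 'rV[R]_n)
  (r M p : R) (lam : R -> nat -> R) : Prop :=
  [/\ 0 < r, 1 <= M & 0 < p] /\
      (forall s k, 0 <= s <= r -> 0 <= lam s k) /\
      (forall k, {within `[0, r], continuous (fun s => lam s k)}) /\
      (forall k s t, 0 <= s -> s <= t -> t <= r -> lam s k <= lam t k) /\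
      (forall k, lam 0 k = 0) /\
      (forall s, 0 <= s <= r -> forall k l, (k <= l)%N -> lam s l <= lam s k) /\
      (forall s, 0 <= s <= r -> lam s 0%N <= s) /\
      ((\sum_(0 <= k <oo) ((lam r k) `^ p)%:E) < +oo)%E /\
      (forall x, dist N x A <= r ->
         exists pi, admissible U pi /\
           forall k, dist N (traj f x pi k) A <= M * lam (dist N x A) k).

Definition attraction_domain (R : realType) (n m : nat) (N : 'rV[R]_n -> R)
  (f : 'rV[R]_n -> 'rV[R]_m -> 'rV[R]_n) (U : set 'rV[R]_m) (A : set 'rV[R]_n)
  : set 'rV[R]_n :=
  [set x | exists pi, admissible U pi /\
     (fun k => dist N (traj f x pi k) A) @ \oo --> (0 : R)].

Definition Psi (R : realType) (n : nat) (alpha : 'rV[R]_n -> R) (X : set 'rV[R]_n) : R :=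
  inf [set alpha y | y in X].

Definition Vfun (R : realType) (n m : nat) (f : 'rV[R]_n -> 'rV[R]_m -> 'rV[R]_n)
  (U : set 'rV[R]_m) (alpha : 'rV[R]_n -> R) (X : set 'rV[R]_n) : \bar R :=
  (\sum_(0 <= k <oo) (Psi alpha (reach f U X k))%:E)%E.

From HB Require Import structures.
From mathcomp Require Import all_boot all_order all_algebra.
From mathcomp Require Import all_classical all_reals all_analysis.
From mathcomp Require Import lra.
Set Implicit Arguments. Unset Strict Implicit. Unset Printing Implicit Defensive.
Import Order.TTheory GRing.Theory Num.Theory.
Import numFieldNormedType.Exports.
Local Open Scope classical_set_scope.
Local Open Scope ring_scope.

(* A point outside D_A lies at distance > r from A: otherwise the stabilizing
   input keeps dist(phi_x(k), A) <= M lam(r, k), which tends to 0 because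
   lam(r, .) is p-summable.  Being unattracted is preserved by every step
   x |-> f x u, so by induction on K, with uniform continuity of f on the
   compact sets Y x U, every compact set Y of unattracted points has a
   d-neighbourhood whose trajectories stay at distance > r/2 from A for K + 1
   steps.  Once X_j is d-close to X in the Hausdorff distance, the first K + 1
   terms of V(X_j) are thus all >= alo (r/2)^pbar, and K is arbitrary. *)

Section Norm.
Variables (R : realType) (n : nat) (N : 'rV[R]_n -> R).
Hypothesis hN : is_norm N.

Lemma nrm0 : N 0 = 0.
Proof. by case: hN => _ NZ _; rewrite -(scale0r (0 : 'rV[R]_n)) NZ normr0 mul0r. Qed.

Lemma nrmN x : N (- x) = N x.
Proof. by case: hN => _ NZ _; rewrite -scaleN1r NZ normrN normr1 mul1r. Qed.

Lemma nrm_ge0 x : 0 <= N x.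
Proof.
case: hN => _ _ ND; have := ND x (- x).
by rewrite subrr nrm0 nrmN -mulr2n pmulrn_lge0.
Qed.

Lemma nrm_distC x y : N (x - y) = N (y - x).
Proof. by rewrite -nrmN opprB. Qed.

Lemma nrm_sum (I : Type) (s : seq I) (F : I -> 'rV[R]_n) :
  N (\sum_(i <- s) F i) <= \sum_(i <- s) N (F i).
Proof.
case: hN => _ _ ND; elim: s => [|i s IH]; first by rewrite !big_nil nrm0.
by rewrite !big_cons; apply: le_trans (ND _ _) _; rewrite lerD2l.
Qed.

Lemma ler_mxentry_norm (p q : nat) (v : 'M[R]_(p, q)) i j : `|v i j| <= `|v|.
Proof.
rewrite [X in _ <= X]mx_normrE.
exact: (le_bigmax _ (fun ij : 'I_p * 'I_q => `|v ij.1 ij.2|) (i, j)).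
Qed.

Lemma nrm_le_mx_norm : exists2 C, 0 < C & forall v, N v <= C * `|v|.
Proof.
case: hN => _ NZ _; pose C := \sum_(j < n) N 'e_j.
have C0 : 0 <= C by rewrite sumr_ge0 // => j _; exact: nrm_ge0.
exists (1 + C) => [|v]; first by rewrite ltr_wpDr.
rewrite {1}(row_sum_delta v); apply: le_trans (nrm_sum _ _) _.
apply: (@le_trans _ _ (C * `|v|)); last by rewrite ler_wpM2r // lerDr.
rewrite mulr_suml; apply: ler_sum => j _; rewrite NZ mulrC.
by rewrite ler_wpM2l ?nrm_ge0 ?ler_mxentry_norm.
Qed.

Lemma nrm_dist_dist x y : `|N x - N y| <= N (x - y).
Proof.
case: hN => _ _ ND; have := ND (y - x) x; have := ND (x - y) y.
by rewrite !subrK nrm_distC ler_norml => ? ?; apply/andP; split; lra.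
Qed.

Lemma nrm_continuous : continuous N.
Proof.
have [C C0 NC] := nrm_le_mx_norm.
move=> x; apply/(@cvgrPdist_lt _ _ _ (nbhs x)) => e e0; apply/nbhs_ballP.
exists (e / C) => [|y]; rewrite /= ?divr_gt0 // -ball_normE /= => xy.
apply: le_lt_trans (nrm_dist_dist _ _) _; apply: le_lt_trans (NC _) _.
by rewrite mulrC -ltr_pdivlMr.
Qed.

Lemma mx_norm_le_nrm : exists2 c, 0 < c & forall v, c * `|v| <= N v.
Proof.
case: hN => N0 NZ _; pose S := [set v : 'rV[R]_n | `|v| = 1].
have S_normalize v : v != 0 -> S (`|v|^-1 *: v).
  by move=> v0; rewrite /S /= normrZ normfV normr_id mulVf ?normr_eq0.
have [[s0 Ss0]|S0] := pselect (S !=set0); last first.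
  exists 1 => // v; rewrite mul1r; have [->|v0] := eqVneq v 0.
    by rewrite normr0 nrm_ge0.
  by exfalso; apply: S0; exists (`|v|^-1 *: v); exact: S_normalize.
have cS : compact S.
  apply: bounded_closed_compact.
    by exists 1; split; rewrite ?num_real // => b b1 v /= ->; exact: ltW.
  exact: (preimage_closed (fun v _ => @norm_continuous R _ v) (@closed_eq R 1)).
have [c /set_mem Sc cmin] :=
  EVT_min_rV (ex_intro _ s0 Ss0) cS (continuous_subspaceT nrm_continuous).
have c0 : 0 < N c.
  rewrite lt0r nrm_ge0 andbT; apply/eqP => /N0 c0.
  by move: Sc; rewrite /S /= c0 normr0 => /esym/eqP; rewrite oner_eq0.
exists (N c) => // v; have [->|v0] := eqVneq v 0; first by rewrite normr0 mulr0 nrm_ge0.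
have := cmin _ (mem_set (S_normalize v v0)); rewrite NZ normfV normr_id.
by rewrite ler_pdivlMl ?normr_gt0 // mulrC.
Qed.

End Norm.

Section Dist.
Variables (R : realType) (n : nat) (N : 'rV[R]_n -> R).
Hypothesis hN : is_norm N.
Variable A : set 'rV[R]_n.
Hypothesis A0 : A !=set0.

Lemma has_inf_dist x : has_inf [set N (x - a) | a in A].
Proof.
split; first by have [a Aa] := A0; exists (N (x - a)), a.
by exists 0 => _ [a _ <-]; exact: nrm_ge0.
Qed.

Lemma dist_ge0 x : 0 <= dist N x A.
Proof.
by apply: lb_le_inf (has_inf_dist x).1 _ => _ [a _ <-]; exact: nrm_ge0.
Qed.

Lemma dist_le_nrm x a : A a -> dist N x A <= N (x - a).
Proof. by move=> Aa; apply: (ge_inf (has_inf_dist x).2); exists a. Qed.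

Lemma dist_lt_nrm x e : dist N x A < e -> exists2 a, A a & N (x - a) < e.
Proof.
rewrite -subr_gt0 => e_gt0.
have [_ [a Aa <-] xa] := inf_adherent e_gt0 (has_inf_dist x).
by exists a => //; rewrite /dist; lra.
Qed.

Lemma dist_le_nrmD x y : dist N x A <= N (x - y) + dist N y A.
Proof.
rewrite -lerBlDl; apply: lb_le_inf (has_inf_dist y).1 _ => _ [a Aa <-].
case: hN => _ _ ND; have := ND (x - y) (y - a); rewrite addrA subrK.
by have := dist_le_nrm x Aa; lra.
Qed.

Lemma hausdorff_lt_nrm (Y : set 'rV[R]_n) d y :
  compact Y -> hausdorff N Y A < d -> Y y -> exists2 a, A a & N (y - a) < d.
Proof.
move=> cY YA Yy; apply: dist_lt_nrm; apply: le_lt_trans YA.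
(* [sup] of a set without upper bound is [0]: boundedness of [Y] is needed. *)
have [C C0 NC] := nrm_le_mx_norm hN; have [a0 Aa0] := A0.
have [b [_ Yb]] := compact_bounded cY.
have ub : has_ubound [set dist N y' A | y' in Y].
  exists (C * (b + 1 + `|a0|)) => _ [y' Yy' <-].
  apply: le_trans (dist_le_nrm y' Aa0) _; apply: le_trans (NC _) _.
  apply: ler_wpM2l; first exact: ltW.
  apply: le_trans (ler_normB _ _) _.
  by rewrite lerD2r Yb // ltrDl.
have yA : dist N y A <= sup [set dist N y' A | y' in Y] by apply: (ub_le_sup ub); exists y.
by apply: le_trans yA _; rewrite /hausdorff le_max lexx.
Qed.

End Dist.

Lemma compact_unif_cont (R : realType) (T V : pseudoMetricType R) (g : T -> V)
    (K : set T) : compact K -> continuous g -> forall e, 0 < e ->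
  exists2 d, 0 < d & forall x y, K x -> ball x d y -> ball (g x) e (g y).
Proof.
move=> cK gc e e0.
have near_cont x : K x -> \forall x' \near x & d \near (0 : R)^'+,
    forall y, ball x' d y -> ball (g x') e (g y).
  move=> Kx; have /nbhs_ballP[eta /= eta0 heta] :
    nbhs x (g @^-1` ball (g x) (e / 2)) by apply/gc/nbhsx_ballx; rewrite divr_gt0.
  exists (ball x (eta / 2), [set d | d < eta / 2]).
    by split; [apply: nbhsx_ballx | apply: nbhs_right_lt]; rewrite divr_gt0.
  case=> x' d /= [xx' d_lt] y x'y.
  have gx' : ball (g x) (e / 2) (g x').
    by apply: heta; apply: le_ball xx'; rewrite ler_pdivrMr // ler_pMr // ler1n.
  have gy : ball (g x) (e / 2) (g y).
    apply: heta; rewrite [eta]splitr.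
    exact: ball_triangle xx' (le_ball (ltW d_lt) x'y).
  by rewrite [e]splitr; exact: ball_triangle (ball_sym gx') gy.
have [d [d0 Kd]] := filter_ex (filterI (nbhs_right_gt 0)
  ((compact_near_coveringP K).1 cK R _ _ _ near_cont)).
by exists d => // x y Kx; exact: Kd.
Qed.

Lemma trajS (R : realType) (n m : nat) (f : 'rV[R]_n -> 'rV[R]_m -> 'rV[R]_n)
    x pi k :
  traj f x pi k.+1 = traj f (f x (pi 0%N)) (fun i => pi i.+1) k.
Proof. by elim: k => //= k ->. Qed.

Lemma reach_neq0 (R : realType) (n m : nat)
    (f : 'rV[R]_n -> 'rV[R]_m -> 'rV[R]_n) (U : set 'rV[R]_m) X k :
  X !=set0 -> U !=set0 -> reach f U X k !=set0.
Proof.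
move=> [x Xx] [u Uu].
by exists (traj f x (fun=> u) k), x, (fun=> u); split.
Qed.

Lemma Psi_ge (R : realType) (n : nat) (alpha : 'rV[R]_n -> R) Y c :
  Y !=set0 -> (forall y, Y y -> c <= alpha y) -> c <= Psi alpha Y.
Proof.
move=> [y Yy] Yc; apply: lb_le_inf; first by exists (alpha y), y.
by move=> _ [z Yz <-]; exact: Yc.
Qed.

Section Series.
Variable R : realType.

Lemma nneseries_term_cvg0 (u : R^nat) : (forall k, 0 <= u k) ->
  (\sum_(0 <= k <oo) (u k)%:E < +oo)%E -> u k @[k --> \oo] --> 0.
Proof.
move=> u0 su; have ue0 k : (0 <= (u k)%:E)%E by rewrite lee_fin.
have tail0 := nneseries_tail_cvg su (fun k _ => ue0 k).
suff /fine_cvgP[] : (u k)%:E @[k --> \oo] --> 0%:E by [].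
apply: squeeze_cvge tail0; last exact: cvg_cst.
apply: nearW => k; rewrite lee_fin u0 /=.
by have := @nneseries_lim_ge _ _ xpredT k k.+1 (fun i _ _ => ue0 i); rewrite big_nat1.
Qed.

Lemma powR_cvg0_ge0 (u : R^nat) p : 0 < p -> (forall k, 0 <= u k) ->
  (u k `^ p) @[k --> \oo] --> 0 -> u k @[k --> \oo] --> 0.
Proof.
move=> p0 u0 up0; apply/cvgrPdist_lt => e e0.
apply: filterS (cvgr_dist_lt _ _ up0 _ (powR_gt0 p e0)) => k.
rewrite !sub0r !normrN ger0_norm ?powR_ge0 // ger0_norm // => ukp.
rewrite ltNge; apply/negP => /(ge0_ler_powR (ltW p0)).
by rewrite !nnegrE u0 ltW // leNgt ukp => /(_ isT isT).
Qed.

Lemma nneseries_ge_prefix (u : R^nat) c K : (forall k, 0 <= u k) ->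
  (forall k, (k <= K)%N -> c <= u k) ->
  ((K.+1%:R * c)%:E <= \sum_(0 <= k <oo) (u k)%:E)%E.
Proof.
move=> u0 uc; apply: le_trans (nneseries_lim_ge K.+1 _); last first.
  by move=> k _ _; rewrite lee_fin.
rewrite sumEFin lee_fin mulr_natl -[K.+1]subn0 -sumr_const_nat.
by apply: ler_sum_nat => k /andP[_]; rewrite ltnS; exact: uc.
Qed.

End Series.

Section System.
Variables (R : realType) (n m : nat) (N : 'rV[R]_n -> R)
  (f : 'rV[R]_n -> 'rV[R]_m -> 'rV[R]_n) (U : set 'rV[R]_m).
Hypotheses (hN : is_norm N)
  (fc : continuous (fun q : 'rV[R]_n * 'rV[R]_m => f q.1 q.2)) (cU : compact U).

Lemma nrm_unif_cont_step (Y : set 'rV[R]_n) : compact Y -> forall e, 0 < e ->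
  exists2 d, 0 < d & forall x u y, Y x -> U u -> N (y - x) < d ->
    N (f y u - f x u) < e.
Proof.
move=> cY e e0.
have [C C0 NC] := nrm_le_mx_norm hN; have [c c0 cN] := mx_norm_le_nrm hN.
have [d d0 fd] := compact_unif_cont (compact_setX cY cU) fc (divr_gt0 e0 C0).
exists (c * d) => [|x u y Yx Uu xy]; first by rewrite mulr_gt0.
have /fd : ball (x, u) d (y, u).
  split => /=; last exact: ballxx.
  rewrite -ball_normE /= -(ltr_pM2l c0); apply: le_lt_trans xy.
  by rewrite (nrm_distC hN); exact: cN.
rewrite -ball_normE /= => /(_ (conj Yx Uu)) fxy.
by apply: le_lt_trans (NC _) _; rewrite -ltr_pdivlMl // mulrC distrC.
Qed.

Variables (A : set 'rV[R]_n) (r M p : R) (lam : R -> nat -> R).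
Hypotheses (A0 : A !=set0) (hS : lp_stabilizable N f U A r M p lam).

Let D := attraction_domain N f U A.

Lemma unattracted_dist_gt x : ~ D x -> r < dist N x A.
Proof.
case: hS => [[r0 M1 p0] [lam0 [_ [lam_mono [_ [_ [_ [sum_lam stab]]]]]]]].
move=> nDx; rewrite ltNge; apply/negP => xr; apply: nDx.
have [pi [adm pi_lam]] := stab x xr; exists pi; split => //.
have lam_r0 k : 0 <= lam r k by apply: lam0; rewrite lexx ltW.
have lam_cvg : lam r k @[k --> \oo] --> 0.
  apply: (powR_cvg0_ge0 p0 lam_r0).
  exact: (nneseries_term_cvg0 (fun k => powR_ge0 _ _) sum_lam).
apply: (@squeeze_cvgr _ _ _ _ (fun=> 0) (fun k => lam r k * M)).
- apply: nearW => k /=; rewrite dist_ge0 //= mulrC.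
  apply: le_trans (pi_lam k) _; rewrite ler_wpM2l ?(le_trans ler01 M1) //.
  by apply: lam_mono; rewrite ?dist_ge0.
- exact: cvg_cst.
- by rewrite -(mul0r M); apply: cvgM lam_cvg (cvg_cst M).
Qed.

Lemma unattracted_step x u : ~ D x -> U u -> ~ D (f x u).
Proof.
move=> nDx Uu [pi [adm pi_cvg]]; apply: nDx.
exists (fun k => if k is k'.+1 then pi k' else u); split; first by case.
by rewrite -cvg_shiftS; under eq_fun do rewrite trajS.
Qed.

Lemma unattracted_tube K (Y : set 'rV[R]_n) : compact Y -> Y `<=` ~` D ->
  exists2 d, 0 < d & forall x y pi k, Y x -> N (y - x) < d ->
    admissible U pi -> (k <= K)%N -> r / 2 < dist N (traj f y pi k) A.
Proof.
have r0 : 0 < r by case: hS => [[]].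
have near_far x y : ~ D x -> N (y - x) < r / 2 -> r / 2 < dist N y A.
  move=> /unattracted_dist_gt xA xy.
  by have := dist_le_nrmD hN A0 x y; rewrite (nrm_distC hN); lra.
elim: K Y => [|K IH] Y cY YD.
  exists (r / 2) => [|x y pi [|//] Yx xy _ _]; first by rewrite divr_gt0.
  exact: near_far (YD x Yx) xy.
pose Y' := (fun q : 'rV[R]_n * 'rV[R]_m => f q.1 q.2) @` (Y `*` U).
have cY' : compact Y'.
  exact: continuous_compact (continuous_subspaceT fc) (compact_setX cY cU).
have Y'D : Y' `<=` ~` D.
  by move=> _ [[x u] [/= Yx Uu] <-]; exact: unattracted_step (YD x Yx) Uu.
have [d' d'0 Y'd'] := IH Y' cY' Y'D.
have [d1 d10 fd1] := nrm_unif_cont_step cY d'0.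
exists (Num.min d1 (r / 2)) => [|x y pi [|k] Yx xy adm k_le].
- by rewrite lt_min d10 divr_gt0.
- by apply: near_far (YD x Yx) _; apply: lt_le_trans xy _; rewrite ge_min lexx orbT.
- rewrite trajS; apply: (Y'd' (f x (pi 0%N))) => //.
  + by exists (x, pi 0%N) => //; split => //; exact: adm.
  + by apply: fd1 => //; apply: lt_le_trans xy _; rewrite ge_min lexx.
Qed.

End System.

Theorem theorem8 (R : realType) (n m : nat) (N : 'rV[R]_n -> R)
  (f : 'rV[R]_n -> 'rV[R]_m -> 'rV[R]_n) (U : set 'rV[R]_m) (A : set 'rV[R]_n)
  (r M p : R) (lam : R -> nat -> R)
  (alpha : 'rV[R]_n -> R) (alo ahi pbar : R)
  (X : set 'rV[R]_n) (Xs : nat -> set 'rV[R]_n) :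
  is_norm N ->
  continuous (fun q : 'rV[R]_n * 'rV[R]_m => f q.1 q.2) ->
  nonempty_compact U ->
  nonempty_compact A ->
  controlled_invariant f U A ->
  lp_stabilizable N f U A r M p lam ->
  continuous alpha ->
  0 < alo -> 0 < ahi -> p <= pbar ->
  (forall x, alo * (dist N x A) `^ pbar <= alpha x /\
             alpha x <= ahi * (dist N x A) `^ pbar) ->
  nonempty_compact X ->
  X `&` attraction_domain N f U A = set0 ->
  (forall k, nonempty_compact (Xs k)) ->
  (fun k => hausdorff N (Xs k) X) @ \oo --> (0 : R) ->
  (fun k => Vfun f U alpha (Xs k)) @ \oo --> +oo%E.
Proof.
move=> hN fc [cU U0] [cA A0] _ hS _ alo0 _ p_pbar alpha_ge [cX X0] XD Xs_cpt Xs_cvg.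
have [r0 pbar0] : 0 < r /\ 0 <= pbar by case: hS => [[r0 _ p0] _]; split; lra.
pose c := alo * (r / 2) `^ pbar.
have c0 : 0 < c by rewrite mulr_gt0 // powR_gt0 // divr_gt0.
have alpha_ge0 z : 0 <= alpha z.
  by apply: le_trans (alpha_ge z).1; rewrite mulr_ge0 ?powR_ge0 ?ltW.
have alpha_far z : r / 2 < dist N z A -> c <= alpha z.
  move=> zA; apply: le_trans (alpha_ge z).1; apply: ler_wpM2l; first exact: ltW.
  have r2_ge0 : 0 <= r / 2 by rewrite divr_ge0 ?ltW.
  apply: ge0_ler_powR => //; rewrite ?nnegrE ?(le_trans r2_ge0) ?ltW //.
have XD' : X `<=` ~` attraction_domain N f U A.
  by move=> x Xx Dx; suff : set0 x by []; rewrite -XD.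
apply/cvgeyPge => B; pose K := Num.truncn (B / c).
have [d d0 tube] := unattracted_tube hN fc cU A0 hS K cX XD'.
apply: filterS (cvgr_dist_lt _ _ Xs_cvg _ d0) => j; rewrite sub0r normrN => Xs_d.
have [cXj Xj0] := Xs_cpt j.
apply: le_trans (nneseries_ge_prefix (c := c) (u := fun k => Psi alpha (reach f U (Xs j) k)) _ _).
- by rewrite lee_fin ltW // -ltr_pdivrMr //; exact: truncnS_gt.
- by move=> k; apply: Psi_ge => [|z _]; [exact: reach_neq0 | exact: alpha_ge0].
move=> k kK; apply: Psi_ge => [|_ [y [pi [Xjy adm ->]]]]; first exact: reach_neq0.
have [x Xx yx] := hausdorff_lt_nrm hN X0 cXj (le_lt_trans (ler_norm _) Xs_d) Xjy.
exact: alpha_far (tube x y pi k Xx yx adm kK).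
Qed.
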